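(* Let $a$ and $c$ be coprime positive integers with $a$ odd. Then for every integer $p\ge0$ and all $x,z\in\mathbb{R}$: if $c$ is even, $$\sum_{\mu=0}^{a-1}\mathcal{E}_{p}\Big(c\frac{\mu+x}{a}+z\Big)=a^{-p}\mathcal{E}_{p}(az+cx),$$ and if $c$ is odd, $$\sum_{\mu=0}^{a-1}(-1)^{\mu}\mathcal{E}_{p}\Big(c\frac{\mu+x}{a}+z\Big)=a^{-p}\mathcal{E}_{p}(az+cx).$$
   Context: $E_n(x)$ is the $n$th Euler polynomial, defined by $\frac{2e^{xt}}{e^t+1}=\sum_{n\ge0}E_n(x)\frac{t^n}{n!}$, and the $n$th Euler function $\mathcal{E}_n$ ($n\ge0$) is defined by $\mathcal{E}_n(x)=E_n(x)$ for $0\le x<1$ and $\mathcal{E}_n(x+m)=(-1)^m\mathcal{E}_n(x)$ for $m\in\mathbb{Z}$. *)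

From Stdlib Require Import Reals Lra Lia ZArith Arith.
Open Scope R_scope.

(* Euler polynomials E_n(x), defined by 2 e^{xt}/(e^t+1) = sum E_n(x) t^n/n!.
   Multiplying the generating function by (e^t+1) and comparing coefficients of
   t^n/n! gives  sum_{k=0}^{n} C(n,k) E_k(x) + E_n(x) = 2 x^n, i.e.
   E_0(x) = 1,  E_{m+1}(x) = x^{m+1} - 1/2 * sum_{k=0}^{m} C(m+1,k) E_k(x).
   [eul_upto n x k] = E_k(x) for k <= n. *)
Fixpoint eul_upto (n : nat) (x : R) : nat -> R :=
  match n with
  | O => fun _ => 1
  | S m =>
      let f := eul_upto m x in
      fun k => if (k <=? m)%nat then f k
               else x ^ (S m) - / 2 * sum_f_R0 (fun j => C (S m) j * f j) m
  end.

Definition euler_poly (n : nat) (x : R) : R := eul_upto n x n.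

Definition rfloor (y : R) : Z := (up y - 1)%Z.

Definition euler_fun (n : nat) (y : R) : R :=
  (if Z.even (rfloor y) then 1 else -1) * euler_poly n (y - IZR (rfloor y)).

From Stdlib Require Import Reals Lra Lia ZArith Znumtheory.
From mathcomp Require all_boot all_algebra Rstruct ring lra.
Open Scope R_scope.

(* Write a z + c x = n + θ with n an integer and 0 <= θ < 1.  The μ-th argument is
   (cμ + n + θ)/a = q + (r + θ)/a where cμ + n = a q + r with 0 <= r < a, so its Euler
   function is (-1)^q E_p((r + θ)/a); as a is odd, (-1)^q = (-1)^(cμ) (-1)^n (-1)^r, and the
   factor (-1)^(cμ) is 1 for even c and (-1)^μ for odd c.  Since a and c are coprime, μ ↦ r
   permutes {0, ..., a-1}, so both sums equal (-1)^n Σ_r (-1)^r E_p((θ + r)/a), which is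
   a^(-p) E_p(θ) by the multiplication formula for odd a.  That formula, like the addition
   formula E_p(x + h) = Σ_j C(p,j) E_j(x) h^(p-j), holds because the recurrence
   Σ_j C(p,j) E_j(x) + E_p(x) = 2 x^p determines the Euler polynomials. *)

Definition m1powZ (q : Z) : R := if Z.even q then 1 else -1.

Lemma m1powZ_add u v : m1powZ (u + v) = m1powZ u * m1powZ v.
Proof. unfold m1powZ. rewrite Z.even_add. destruct (Z.even u), (Z.even v); simpl; ring. Qed.

Lemma m1powZ_mul_odd a q : Z.odd a = true -> m1powZ (a * q) = m1powZ q.
Proof. intro ha. unfold m1powZ. rewrite Z.even_mul, <- Z.negb_odd, ha. reflexivity. Qed.

Lemma m1powZ_sqr q : m1powZ q * m1powZ q = 1.
Proof. unfold m1powZ. destruct (Z.even q); ring. Qed.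

Lemma m1powZ_of_nat k : m1powZ (Z.of_nat k) = (-1) ^ k.
Proof.
induction k as [|k IH]; [reflexivity|].
rewrite Nat2Z.inj_succ, <- Z.add_1_r, m1powZ_add, IH. simpl. unfold m1powZ. simpl. ring.
Qed.

Lemma Z_odd_of_nat a : Z.odd (Z.of_nat a) = Nat.odd a.
Proof.
destruct (Nat.Even_or_Odd a) as [[k ->] | [k ->]].
- rewrite Nat.odd_mul, Nat2Z.inj_mul, Z.odd_mul. reflexivity.
- rewrite Nat.odd_add, Nat.odd_mul, Nat2Z.inj_add, Nat2Z.inj_mul, Z.odd_add, Z.odd_mul.
  reflexivity.
Qed.

Lemma rfloor_frac_bounds y : 0 <= y - IZR (rfloor y) < 1.
Proof. unfold rfloor. destruct (archimed y). rewrite minus_IZR. simpl. lra. Qed.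

Lemma rfloor_IZR_add q t : 0 <= t < 1 -> rfloor (IZR q + t) = q.
Proof.
intros ht. unfold rfloor.
enough (up (IZR q + t) = (q + 1)%Z) by lia.
symmetry. apply tech_up; rewrite plus_IZR; simpl; lra.
Qed.

Lemma euler_fun_IZR_add p q t : 0 <= t < 1 ->
  euler_fun p (IZR q + t) = m1powZ q * euler_poly p t.
Proof.
intros ht. unfold euler_fun. rewrite rfloor_IZR_add by exact ht.
replace (IZR q + t - IZR q) with t by ring. reflexivity.
Qed.

Lemma rel_prime_of_nat_gcd a c : (0 < a)%nat -> Nat.gcd a c = 1%nat ->
  rel_prime (Z.of_nat a) (Z.of_nat c).
Proof.
intros ha hg. apply bezout_rel_prime.
destruct (Nat.gcd_bezout_pos a c ha) as [u [v e]]. rewrite hg in e.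
apply (Bezout_intro _ _ _ (Z.of_nat u) (- Z.of_nat v)). lia.
Qed.

Lemma Zmod_mul_add_inj (A C n m1 m2 : Z) : rel_prime A C ->
  (0 <= m1 < A)%Z -> (0 <= m2 < A)%Z -> ((C * m1 + n) mod A = (C * m2 + n) mod A)%Z ->
  m1 = m2.
Proof.
intros hAC h1 h2 e.
assert (hdiv : (A | C * (m1 - m2))%Z).
{ apply Z.mod_divide; [lia |].
  replace (C * (m1 - m2))%Z with ((C * m1 + n) - (C * m2 + n))%Z by ring.
  now rewrite Zminus_mod, e, Z.sub_diag, Zmod_0_l. }
apply Gauss in hdiv; [| exact hAC].
destruct (Z.eq_dec (m1 - m2) 0) as [| hne]; [lia |].
apply Zdivide_bounds in hdiv; [lia | exact hne].
Qed.

Definition residue (a c : nat) (n : Z) (mu : nat) : nat :=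
  Z.to_nat ((Z.of_nat c * Z.of_nat mu + n) mod Z.of_nat a).

Lemma residue_lt a c n mu : (0 < a)%nat -> (residue a c n mu < a)%nat.
Proof.
intros ha. unfold residue.
pose proof (Z.mod_pos_bound (Z.of_nat c * Z.of_nat mu + n) (Z.of_nat a)). lia.
Qed.

Lemma residue_inj a c n mu1 mu2 : (0 < a)%nat -> Nat.gcd a c = 1%nat ->
  (mu1 < a)%nat -> (mu2 < a)%nat -> residue a c n mu1 = residue a c n mu2 -> mu1 = mu2.
Proof.
intros ha hg h1 h2 e. unfold residue in e.
pose proof (Z.mod_pos_bound (Z.of_nat c * Z.of_nat mu1 + n) (Z.of_nat a)).
pose proof (Z.mod_pos_bound (Z.of_nat c * Z.of_nat mu2 + n) (Z.of_nat a)).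
apply Nat2Z.inj, (Zmod_mul_add_inj (Z.of_nat a) (Z.of_nat c) n); try lia.
now apply rel_prime_of_nat_gcd.
Qed.

Lemma m1powZ_div_odd N A : Z.odd A = true ->
  m1powZ (N / A) = m1powZ N * m1powZ (N mod A).
Proof.
intros hA. assert (A <> 0%Z) by (intros ->; discriminate).
rewrite (Z.div_mod N A) at 2 by assumption.
rewrite m1powZ_add, m1powZ_mul_odd, Rmult_assoc, m1powZ_sqr by exact hA. ring.
Qed.

Lemma euler_fun_div p a N t : (0 < a)%nat -> 0 <= t < 1 ->
  euler_fun p ((IZR N + t) / INR a)
  = m1powZ (N / Z.of_nat a) * euler_poly p ((IZR (N mod Z.of_nat a) + t) / INR a).
Proof.
intros ha ht.
pose proof (Z.mod_pos_bound N (Z.of_nat a) ltac:(lia)) as hr.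
pose proof (Z.div_mod N (Z.of_nat a) ltac:(lia)) as hN.
assert (hpos : 0 < INR a) by (apply lt_0_INR; exact ha).
assert (hr' : 0 <= IZR (N mod Z.of_nat a) <= INR a - 1).
{ rewrite INR_IZR_INZ, <- minus_IZR. split; apply IZR_le; lia. }
rewrite <- euler_fun_IZR_add.
- f_equal. apply (f_equal IZR) in hN. rewrite plus_IZR, mult_IZR, <- INR_IZR_INZ in hN.
  rewrite hN at 1. field. lra.
- split.
  + apply Rle_mult_inv_pos; lra.
  + apply (Rmult_lt_reg_r (INR a)); [lra |].
    unfold Rdiv. rewrite Rmult_assoc, Rinv_l by lra. lra.
Qed.

Lemma euler_fun_residue a c p mu w : Nat.odd a = true ->
  (-1) ^ (c * mu) * euler_fun p ((INR c * INR mu + w) / INR a)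
  = m1powZ (rfloor w) * ((-1) ^ residue a c (rfloor w) mu
      * euler_poly p ((w - IZR (rfloor w) + INR (residue a c (rfloor w) mu)) / INR a)).
Proof.
intros ha.
assert (hA : (0 < a)%nat) by (destruct a; [discriminate | lia]).
set (n := rfloor w). set (N := (Z.of_nat c * Z.of_nat mu + n)%Z).
replace (INR c * INR mu + w) with (IZR N + (w - IZR n))
  by (unfold N; rewrite plus_IZR, mult_IZR, <- !INR_IZR_INZ; ring).
rewrite euler_fun_div, m1powZ_div_odd; [| rewrite Z_odd_of_nat; exact ha | exact hA |
  apply rfloor_frac_bounds].
unfold residue. fold N.
pose proof (Z.mod_pos_bound N (Z.of_nat a) ltac:(lia)).
rewrite <- (m1powZ_of_nat (Z.to_nat _)), (INR_IZR_INZ (Z.to_nat _)), Z2Nat.id by lia.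
rewrite <- m1powZ_of_nat, Nat2Z.inj_mul. unfold N at 1. rewrite m1powZ_add.
set (s := m1powZ (Z.of_nat c * Z.of_nat mu)).
transitivity (s * s * (m1powZ n * (m1powZ (N mod Z.of_nat a)
  * euler_poly p ((IZR (N mod Z.of_nat a) + (w - IZR n)) / INR a)))); [ring |].
unfold s. rewrite m1powZ_sqr, (Rplus_comm (IZR _)). ring.
Qed.

(* MathComp is imported only inside this module: outside it, [<] on [nat] must keep its
   Stdlib meaning for the statement of [lemma1]. *)
Module EulerPolynomial.

Import all_boot all_algebra Rstruct ring lra GRing.Theory Num.Theory.

Lemma bin_trinomial n i j : ('C(n, i + j) * 'C(i + j, j) = 'C(n, j) * 'C(n - j, i))%N.
Proof.
have [ijn | ltn_ij] := leqP (i + j) n; last first.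
  rewrite bin_small // mul0n; have [jn | ltn_j] := leqP j n; last by rewrite (@bin_small n j).
  by rewrite (@bin_small (n - j)) ?muln0 // ltn_subLR // addnC.
have jn : (j <= n)%N by apply: leq_trans ijn; rewrite leq_addl.
have fact_pos : (0 < i`! * j`! * (n - (i + j))`!)%N by rewrite !muln_gt0 !fact_gt0.
apply/eqP; rewrite -(eqn_pmul2r fact_pos); apply/eqP.
have lhs : ('C(n, i + j) * 'C(i + j, j) * (i`! * j`! * (n - (i + j))`!) = n`!)%N.
  rewrite -(bin_fact ijn) -(bin_fact (leq_addl i j)) addnK; ring.
have rhs : ('C(n, j) * 'C(n - j, i) * (i`! * j`! * (n - (i + j))`!) = n`!)%N.
  have i_nj : (i <= n - j)%N by rewrite leq_subRL // addnC.
  rewrite -(bin_fact jn) -(bin_fact i_nj) -subnDA [(j + i)%N]addnC; ring.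
by rewrite lhs rhs.
Qed.

Local Open Scope ring_scope.

Lemma sum_bin_mul_bin {R : comPzSemiRingType} (s t : R) n j : (j <= n)%N ->
  \sum_(m < n.+1) 'C(n, m)%:R * 'C(m, j)%:R * s ^+ (n - m) * t ^+ (m - j)
  = 'C(n, j)%:R * (s + t) ^+ (n - j).
Proof.
move=> jn; set F := fun m => 'C(n, m)%:R * 'C(m, j)%:R * s ^+ (n - m) * t ^+ (m - j).
rewrite -(big_mkord xpredT F) (big_cat_nat (leq0n j) (leqW jn)) /=.
rewrite big1_seq => [|m]; last first.
  by rewrite mem_index_iota => /andP[_ mj]; rewrite /F (bin_small mj) mulr0 !mul0r.
rewrite add0r -{1}(add0n j) big_addn subSn // big_mkord.
rewrite exprDn mulr_sumr; apply: eq_bigr => i _.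
rewrite /F addnK -[_ *+ 'C(n - j, i)]mulr_natr.
have -> : (n - (i + j) = n - j - i)%N by rewrite addnC subnDA.
transitivity (('C(n, i + j) * 'C(i + j, j))%:R * s ^+ (n - j - i) * t ^+ i).
  by rewrite natrM; ring.
by rewrite bin_trinomial natrM; ring.
Qed.

Lemma sum_bin_nested {R : comPzSemiRingType} (e : nat -> R) (s t : R) n :
  \sum_(m < n.+1) 'C(n, m)%:R * s ^+ (n - m)
                  * \sum_(j < m.+1) 'C(m, j)%:R * e j * t ^+ (m - j)
  = \sum_(j < n.+1) 'C(n, j)%:R * e j * (s + t) ^+ (n - j).
Proof.
transitivity (\sum_(m < n.+1) \sum_(j < n.+1)
    'C(n, m)%:R * 'C(m, j)%:R * s ^+ (n - m) * t ^+ (m - j) * e j).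
  apply: eq_bigr => m _.
  rewrite (big_ord_widen n.+1 (fun j => 'C(m, j)%:R * e j * t ^+ (m - j))) //.
  rewrite big_mkcond mulr_sumr; apply: eq_bigr => j _.
  by case: ltnP => [_ | mj]; [ring | rewrite (bin_small mj) !(mulr0, mul0r)].
rewrite exchange_big; apply: eq_bigr => j _.
have jn : (j <= n)%N := ltn_ord j.
by rewrite -mulr_suml sum_bin_mul_bin //; ring.
Qed.

Lemma telescope_sumr_alt {R : pzRingType} (u : nat -> R) m :
  \sum_(k < m) (-1) ^+ k * (u k.+1 + u k) = u 0%N - (-1) ^+ m * u m.
Proof.
rewrite -(big_mkord xpredT (fun k => (-1) ^+ k * (u k.+1 + u k))).
rewrite (telescope_sumr_eq (fun k => - ((-1) ^+ k * u k))) => [|//|k _].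
  by rewrite expr0 mul1r opprK addrC.
by rewrite exprS mulN1r mulNr !opprK mulrDr.
Qed.

Local Notation E n x := (euler_poly n x%R).

Lemma eul_upto_le n x k : (k <= n)%N -> eul_upto n x k = E k x.
Proof.
elim: n => [|n IH] hk; first by move: hk; rewrite leqn0 => /eqP ->.
case: (ltngtP k n.+1) hk => // [+ _ | -> _] //; rewrite ltnS => kn.
by rewrite /= (proj2 (Nat.leb_le _ _) (elimT leP kn)) IH.
Qed.

Lemma C_natr n k : (k <= n)%N -> C n k = 'C(n, k)%:R.
Proof.
move=> hk; rewrite /C !RealsE -(bin_fact hk) !natrM mulfK //.
by rewrite mulf_neq0 // pnatr_eq0 -lt0n fact_gt0.
Qed.

Lemma euler_poly0 x : E 0 x = 1.
Proof. by []. Qed.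

Lemma euler_polyS m x :
  E m.+1 x = x ^+ m.+1 - 2^-1 * \sum_(j < m.+1) 'C(m.+1, j)%:R * E j x.
Proof.
rewrite {1}/euler_poly; cbn [eul_upto].
rewrite (proj2 (Nat.leb_gt _ _) (Nat.lt_succ_diag_r m)).
rewrite !RealsE big_mkord.
have -> : \sum_(j < m.+1) C m.+1 j * eul_upto m x j
        = \sum_(j < m.+1) 'C(m.+1, j)%:R * E j x.
  apply: eq_bigr => j _; have jm : (j <= m)%N := ltn_ord j.
  by rewrite C_natr ?eul_upto_le // (leq_trans jm).
by [].
Qed.

Lemma euler_poly_rec n x : \sum_(j < n.+1) 'C(n, j)%:R * E j x + E n x = 2 * x ^+ n.
Proof.
case: n => [|m]; first by rewrite big_ord1 bin0 euler_poly0 expr0; lra.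
rewrite big_ord_recr /= binn euler_polyS; lra.
Qed.

Lemma euler_poly_unique (g : nat -> R) x :
  (forall n, \sum_(j < n.+1) 'C(n, j)%:R * g j + g n = 2 * x ^+ n) ->
  forall n, g n = E n x.
Proof.
move=> g_rec; elim/ltn_ind => n IH.
have sums_eq : \sum_(j < n) 'C(n, j)%:R * g j = \sum_(j < n) 'C(n, j)%:R * E j x.
  by apply: eq_bigr => j _; rewrite IH.
have := euler_poly_rec n x; rewrite -(g_rec n) !big_ord_recr /= binn sums_eq; lra.
Qed.

Lemma euler_polyD n x h :
  E n (x + h) = \sum_(j < n.+1) 'C(n, j)%:R * E j x * h ^+ (n - j).
Proof.
pose g m := \sum_(j < m.+1) 'C(m, j)%:R * E j x * h ^+ (m - j).
symmetry; move: n; apply: (euler_poly_unique g) => n.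
have sum_g : \sum_(m < n.+1) 'C(n, m)%:R * g m
    = \sum_(m < n.+1) 'C(n, m)%:R * h ^+ (n - m) * (2 * x ^+ m - E m x).
  transitivity (\sum_(j < n.+1) 'C(n, j)%:R * E j x * (h + 1) ^+ (n - j)).
    rewrite addrC -(sum_bin_nested (fun j => E j x) 1 h n).
    by apply: eq_bigr => m _; rewrite expr1n mulr1.
  rewrite -(sum_bin_nested (fun j => E j x)); apply: eq_bigr => m _.
  rewrite -(euler_poly_rec m x) addrK; congr (_ * _).
  by apply: eq_bigr => j _; rewrite expr1n mulr1.
rewrite sum_g /g addrC [x + h]addrC exprDn mulr_sumr -big_split; apply: eq_bigr => m _ /=.
ring.
Qed.

Lemma euler_polyD1 n v : E n (v + 1) + E n v = 2 * v ^+ n.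
Proof.
rewrite euler_polyD -(euler_poly_rec n v); congr (_ + _).
by apply: eq_bigr => j _; rewrite expr1n mulr1.
Qed.

Lemma euler_poly_mult_odd m n y : odd m ->
  m%:R ^+ n * \sum_(k < m) (-1) ^+ k * E n ((y + k%:R) / m%:R) = E n y.
Proof.
move=> m_odd; set M : R := m%:R.
have M_neq0 : M != 0 by rewrite pnatr_eq0; case: m m_odd {M}.
pose g n := M ^+ n * \sum_(k < m) (-1) ^+ k * E n ((y + k%:R) / M).
move: n; apply: (euler_poly_unique g) => n.
have step k : \sum_(j < n.+1) 'C(n, j)%:R * (M ^+ j * E j ((y + k%:R) / M))
    = M ^+ n * E n ((y + k.+1%:R) / M).
  have -> : (y + k.+1%:R) / M = (y + k%:R) / M + M^-1.
    by rewrite -natr1 addrA mulrDl mul1r.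
  rewrite euler_polyD mulr_sumr.
  apply: eq_bigr => j _; have jn : (j <= n)%N := ltn_ord j.
  have -> : M ^+ n = M ^+ j * M ^+ (n - j) by rewrite -exprD subnKC.
  rewrite exprVn; field.
  by rewrite expf_neq0.
have sum_g : \sum_(j < n.+1) 'C(n, j)%:R * g j
    = M ^+ n * \sum_(k < m) (-1) ^+ k * E n ((y + k.+1%:R) / M).
  under eq_bigr do rewrite /g !mulr_sumr.
  rewrite exchange_big mulr_sumr; apply: eq_bigr => k _.
  transitivity ((-1) ^+ k
      * \sum_(j < n.+1) 'C(n, j)%:R * (M ^+ j * E j ((y + k%:R) / M))).
    by rewrite mulr_sumr; apply: eq_bigr => j _; ring.
  by rewrite step; ring.
rewrite sum_g /g -mulrDr -big_split /=.
under eq_bigr do rewrite -mulrDr.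
rewrite (telescope_sumr_alt (fun k => E n ((y + k%:R) / M))) /=.
rewrite -signr_odd m_odd expr1 mulN1r opprK addr0 mulrDl divff // addrC euler_polyD1.
rewrite exprMn exprVn; field.
by rewrite expf_neq0.
Qed.

Lemma nat_oddE n : Nat.odd n = odd n.
Proof. by elim: n => // n IH; rewrite Nat.odd_succ -Nat.negb_odd IH. Qed.

Lemma sum_f_R0_ord (f : nat -> R) n : (0 < n)%N ->
  sum_f_R0 f (n - 1)%coq_nat = \sum_(i < n) f i.
Proof. by case: n => // n _; rewrite Nat.sub_1_r /= sum_f_R0E big_mkord. Qed.

Definition residue_ord (a c : nat) (n : Z) (a_gt0 : (0 < a)%N) (mu : 'I_a) : 'I_a :=
  Ordinal (introT ltP (residue_lt a c n mu (elimT ltP a_gt0))).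

Lemma residue_ord_inj (a c : nat) (n : Z) (a_gt0 : (0 < a)%N) :
  Nat.gcd a c = 1%nat -> injective (residue_ord a c n a_gt0).
Proof.
move=> coprime_ac mu1 mu2 /(congr1 val) /= e; apply/val_inj.
exact: (residue_inj a c n mu1 mu2 (elimT ltP a_gt0) coprime_ac
          (elimT ltP (ltn_ord mu1)) (elimT ltP (ltn_ord mu2)) e).
Qed.

Local Close Scope ring_scope.

Lemma euler_fun_mult_odd a c p w : Nat.odd a = true -> Nat.gcd a c = 1%nat ->
  sum_f_R0 (fun mu => (-1) ^ (c * mu)%coq_nat * euler_fun p ((INR c * INR mu + w) / INR a))
    (a - 1)%coq_nat
  = / INR a ^ p * euler_fun p w.
Proof.
move=> a_odd coprime_ac.
have odd_a : odd a by rewrite -nat_oddE.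
have a_gt0 : (0 < a)%N := odd_gt0 odd_a.
rewrite sum_f_R0_ord //.
under eq_bigr => mu _ do rewrite euler_fun_residue //.
set n := rfloor w.
rewrite -[in RHS](Rplus_minus (IZR n) w) euler_fun_IZR_add; last exact: rfloor_frac_bounds.
rewrite -(euler_poly_mult_odd a p (w - IZR n) odd_a) !RealsE mulrCA mulKf; last first.
  by rewrite expf_neq0 // pnatr_eq0 -lt0n.
under eq_bigr do rewrite !RealsE.
rewrite -mulr_sumr [in RHS](reindex_inj (residue_ord_inj a c n a_gt0 coprime_ac)).
by [].
Qed.
End EulerPolynomial.

Theorem lemma1 (a c : nat) (ha : (0 < a)%nat) (hc : (0 < c)%nat)
  (hcop : Nat.gcd a c = 1%nat) (hodd : Nat.odd a = true)
  (p : nat) (x z : R) :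
  (Nat.even c = true ->
     sum_f_R0 (fun mu => euler_fun p (INR c * ((INR mu + x) / INR a) + z)) (a - 1)
     = / (INR a) ^ p * euler_fun p (INR a * z + INR c * x)) /\
  (Nat.odd c = true ->
     sum_f_R0 (fun mu => (-1) ^ mu * euler_fun p (INR c * ((INR mu + x) / INR a) + z)) (a - 1)
     = / (INR a) ^ p * euler_fun p (INR a * z + INR c * x)).
Proof.
set (w := INR a * z + INR c * x).
assert (harg : forall mu, INR c * ((INR mu + x) / INR a) + z = (INR c * INR mu + w) / INR a).
{ intro mu. unfold w. field. apply not_0_INR. lia. }
pose proof (EulerPolynomial.euler_fun_mult_odd a c p w hodd hcop) as key.
split; intro hc_parity; rewrite <- key; apply sum_eq; intros mu _; rewrite harg.
- apply Nat.even_spec in hc_parity as [k ->].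
  rewrite <- Nat.mul_assoc, pow_1_even. ring.
- apply Nat.odd_spec in hc_parity as [k ->].
  rewrite Nat.add_1_r, pow_mult, pow_1_odd. reflexivity.
Qed.
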